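(* Let $\mathcal F$ be a proper filter on $\omega$. In each of the following pairs the two games are dual, i.e. a player has a winning strategy in one game if and only if the other player has a winning strategy in the other game: (1) $\mathfrak G(\mathcal F^+,\omega,\mathcal F)$ and $\mathfrak G(\mathcal F,\omega,\mathcal F^c)$; (2) $\mathfrak G(\mathcal F^+,\omega,\mathcal F^+)$ and $\mathfrak G(\mathcal F,\omega,\mathcal F^* )$; (3) $\mathfrak G(\mathcal F^+,\omega,\mathcal F^c)$ and $\mathfrak G(\mathcal F,\omega,\mathcal F)$; (4) $\mathfrak G(\mathcal F^+,\omega,\mathcal F^* )$ and $\mathfrak G(\mathcal F,\omega,\mathcal F^+)$.
   Context: A filter on $\omega$ is a family $\mathcal F\subseteq\mathcal P(\omega)$ closed under finite intersections and supersets and containing all cofinite sets; it is proper if all its members are infinite. $\mathcal F^+=\{X:\omega\setminus X\notin\mathcal F\}$, $\mathcal F^c=\mathcal P(\omega)\setminus\mathcal F$, $\mathcal F^*=\mathcal P(\omega)\setminus\mathcal F^+$. Game $\mathfrak G(\mathcal X,\omega,\mathcal Z)$: at each stage $k\in\omega$, player I chooses $X_k\in\mathcal X$ and player II responds with $n_k\in X_k$; II wins if $\{n_k:k\in\omega\}\in\mathcal Z$, otherwise I wins. *)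

From Stdlib Require Import List Arith.
Import ListNotations.

Definition set_nat := nat -> Prop.
Definition family := set_nat -> Prop.

Definition compl (X : set_nat) : set_nat := fun n => ~ X n.
Definition cofinite (X : set_nat) : Prop := exists N, forall n, N <= n -> X n.
Definition infinite (X : set_nat) : Prop := forall N, exists n, N <= n /\ X n.

Definition is_filter (F : family) : Prop :=
  (forall A B, F A -> F B -> F (fun n => A n /\ B n)) /\
  (forall A B, F A -> (forall n, A n -> B n) -> F B) /\
  (forall A, cofinite A -> F A).

Definition proper (F : family) : Prop := forall A, F A -> infinite A.

Definition Fplus (F : family) : family := fun X => ~ F (compl X).
Definition Fc (F : family) : family := fun X => ~ F X.
Definition Fstar (F : family) : family := fun X => ~ Fplus F X.

Definition prefix {A} (f : nat -> A) (k : nat) : list A := map f (seq 0 k).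

Definition range (n : nat -> nat) : set_nat := fun m => exists k, n k = m.

(* Game G(XX, omega, ZZ): at stage k, I plays X_k in XX, II answers n_k in X_k;
   II wins iff {n_k : k} in ZZ.
   A strategy for I maps the list of II's previous moves (which, together with
   the strategy, determines the whole history) to I's next move.
   A strategy for II maps the list of I's moves so far (X_0,...,X_k) to n_k. *)
Definition I_strategy := list nat -> set_nat.
Definition II_strategy := list set_nat -> nat.

Definition I_legal (XX : family) (s : I_strategy) : Prop :=
  forall h, XX (s h).

Definition I_winning (XX ZZ : family) (s : I_strategy) : Prop :=
  I_legal XX s /\
  forall n : nat -> nat, (forall k, s (prefix n k) (n k)) -> ~ ZZ (range n).

Definition II_legal (XX : family) (t : II_strategy) : Prop :=
  forall h X, XX X -> X (t (h ++ [X])).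

Definition II_winning (XX ZZ : family) (t : II_strategy) : Prop :=
  II_legal XX t /\
  forall X : nat -> set_nat, (forall k, XX (X k)) ->
    ZZ (range (fun k => t (prefix X (S k)))).

Definition I_wins (XX ZZ : family) : Prop := exists s, I_winning XX ZZ s.
Definition II_wins (XX ZZ : family) : Prop := exists t, II_winning XX ZZ t.

Definition dual_games (XX1 ZZ1 XX2 ZZ2 : family) : Prop :=
  (I_wins XX1 ZZ1 <-> II_wins XX2 ZZ2) /\ (II_wins XX1 ZZ1 <-> I_wins XX2 ZZ2).

(* A winning strategy in one game is converted into one for the other player
   in the dual game by simulating the opponent: II, facing a move B, answers
   with some n in B that I's strategy in the dual game allows, which is
   possible because every F^+-set meets every F-set; I, knowing
   II's strategy t, plays the set of all answers t could give to an F^+-move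
   (resp. F-move), which lies in F (resp. F^+).  The resulting plays have the
   same range, and the payoff sets of dual games are complementary. *)
From Stdlib Require Import List Classical ClassicalEpsilon FunctionalExtensionality.
Import ListNotations.

Lemma prefix_S {A} (f : nat -> A) k : prefix f (S k) = prefix f k ++ [f k].
Proof. unfold prefix. rewrite seq_S, map_app. reflexivity. Qed.

Section II_wins_of_I_wins.

Variables (XX1 XX2 ZZ1 ZZ2 : family).
Hypothesis XX1_meets_XX2 : forall A B, XX1 A -> XX2 B -> exists n, A n /\ B n.
Hypothesis ZZ2_of_notZZ1 : forall S, ~ ZZ1 S -> ZZ2 S.
Variable s : I_strategy.

Definition copy_answer (l : list nat) (B : set_nat) : nat :=
  epsilon (inhabits 0) (fun n => s l n /\ B n).

Lemma copy_answerP l B : XX1 (s l) -> XX2 B -> s l (copy_answer l B) /\ B (copy_answer l B).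
Proof. intros HA HB. unfold copy_answer. apply epsilon_spec. now apply XX1_meets_XX2. Qed.

Definition copy_replies (Bs : list set_nat) : list nat :=
  fold_left (fun l B => l ++ [copy_answer l B]) Bs [].

Lemma copy_replies_rcons h B :
  copy_replies (h ++ [B]) = copy_replies h ++ [copy_answer (copy_replies h) B].
Proof. unfold copy_replies. now rewrite fold_left_app. Qed.

Definition copy_strategy : II_strategy := fun Bs => last (copy_replies Bs) 0.

Lemma copy_strategy_rcons h B :
  copy_strategy (h ++ [B]) = copy_answer (copy_replies h) B.
Proof. unfold copy_strategy. now rewrite copy_replies_rcons, last_last. Qed.

Lemma copy_replies_prefix (B : nat -> set_nat) k :
  copy_replies (prefix B k) = prefix (fun k => copy_strategy (prefix B (S k))) k.
Proof.
  induction k as [|k IHk]; [reflexivity|].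
  rewrite (prefix_S B), copy_replies_rcons, IHk, prefix_S; cbv beta.
  now rewrite (prefix_S B), copy_strategy_rcons, IHk.
Qed.

Lemma copy_strategy_winning : I_winning XX1 ZZ1 s -> II_winning XX2 ZZ2 copy_strategy.
Proof.
  intros [Hlegal Hwin]. split.
  - intros h B HB. rewrite copy_strategy_rcons. now apply copy_answerP.
  - intros B HB. apply ZZ2_of_notZZ1, Hwin. intros k.
    rewrite prefix_S, copy_strategy_rcons, copy_replies_prefix.
    now apply copy_answerP.
Qed.

End II_wins_of_I_wins.

Lemma II_wins_of_I_wins (XX1 XX2 ZZ1 ZZ2 : family) :
  (forall A B, XX1 A -> XX2 B -> exists n, A n /\ B n) ->
  (forall S, ~ ZZ1 S -> ZZ2 S) ->
  I_wins XX1 ZZ1 -> II_wins XX2 ZZ2.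
Proof.
  intros Hmeet HZZ [s Hs].
  exists (copy_strategy s). eapply copy_strategy_winning; eassumption.
Qed.

Definition II_answers (XX : family) (t : II_strategy) (H : list set_nat) : set_nat :=
  fun n => exists X, XX X /\ t (H ++ [X]) = n.

Section I_wins_of_II_wins.

Variables (XX1 XX2 ZZ1 ZZ2 : family) (t : II_strategy).
Hypothesis II_answers_in_XX1 : forall H, XX1 (II_answers XX2 t H).
Hypothesis ZZ1_disjoint_ZZ2 : forall S, ZZ1 S -> ~ ZZ2 S.

Definition pullback_move (H : list set_nat) (m : nat) : set_nat :=
  epsilon (inhabits (fun _ => True)) (fun X => XX2 X /\ t (H ++ [X]) = m).

Lemma pullback_moveP H m :
  II_answers XX2 t H m -> XX2 (pullback_move H m) /\ t (H ++ [pullback_move H m]) = m.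
Proof. intros Hm. unfold pullback_move. now apply epsilon_spec. Qed.

Definition pullback_history (l : list nat) : list set_nat :=
  fold_left (fun H m => H ++ [pullback_move H m]) l [].

Lemma pullback_history_rcons l m :
  pullback_history (l ++ [m]) =
  pullback_history l ++ [pullback_move (pullback_history l) m].
Proof. unfold pullback_history. now rewrite fold_left_app. Qed.

Definition answers_strategy : I_strategy := fun l => II_answers XX2 t (pullback_history l).

Lemma answers_strategy_winning : II_winning XX2 ZZ1 t -> I_winning XX1 ZZ2 answers_strategy.
Proof.
  intros [_ Hwin]. split.
  - intros l. apply II_answers_in_XX1.
  - intros n Hn.
    set (X := fun k => pullback_move (pullback_history (prefix n k)) (n k)).
    assert (HX : forall k, XX2 (X k) /\ t (pullback_history (prefix n k) ++ [X k]) = n k)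
      by (intros k; apply pullback_moveP, Hn).
    assert (Hhist : forall k, pullback_history (prefix n k) = prefix X k).
    { induction k as [|k IHk]; [reflexivity|].
      now rewrite !prefix_S, pullback_history_rcons, <- IHk. }
    assert (Hplay : (fun k => t (prefix X (S k))) = n).
    { apply functional_extensionality. intros k.
      rewrite prefix_S, <- Hhist. apply HX. }
    apply ZZ1_disjoint_ZZ2. rewrite <- Hplay. apply Hwin. intros k. apply HX.
Qed.

End I_wins_of_II_wins.

Lemma I_wins_of_II_wins (XX1 XX2 ZZ1 ZZ2 : family) :
  (forall t, II_legal XX2 t -> forall H, XX1 (II_answers XX2 t H)) ->
  (forall S, ZZ1 S -> ~ ZZ2 S) ->
  II_wins XX2 ZZ1 -> I_wins XX1 ZZ2.
Proof.
  intros Hans HZZ [t [Hlegal Hwin]].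
  exists (answers_strategy XX2 t). eapply answers_strategy_winning; eauto. now split.
Qed.

Section Upward_closed_family.

Variable F : family.
Hypothesis F_up : forall A B, F A -> (forall n, A n -> B n) -> F B.

Lemma Fplus_meets (A B : set_nat) : Fplus F A -> F B -> exists n, A n /\ B n.
Proof.
  intros HA HB. apply NNPP. intros Hdisj. apply HA, (F_up B); [exact HB|].
  intros n Bn An. apply Hdisj. eauto.
Qed.

Lemma II_answers_Fplus (t : II_strategy) :
  II_legal (Fplus F) t -> forall H, F (II_answers (Fplus F) t H).
Proof.
  intros Hlegal H. apply NNPP. intros Hnot.
  (* the complement of the answer set is itself a legal move, and t must answer inside it *)
  assert (Hc : Fplus F (compl (II_answers (Fplus F) t H))).
  { intros Hcc. apply Hnot, (F_up _ _ Hcc). intros n Hn. now apply NNPP. }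
  apply (Hlegal H _ Hc). now exists (compl (II_answers (Fplus F) t H)).
Qed.

Lemma II_answers_F (t : II_strategy) :
  II_legal F t -> forall H, Fplus F (II_answers F t H).
Proof. intros Hlegal H Hc. apply (Hlegal H _ Hc). now exists (compl (II_answers F t H)). Qed.

Lemma dual_games_Fplus_F (ZZ1 ZZ2 : family) :
  (forall S, ZZ1 S <-> ~ ZZ2 S) -> dual_games (Fplus F) ZZ1 F ZZ2.
Proof.
  intros HZZ. split; split.
  - apply II_wins_of_I_wins; [exact Fplus_meets|].
    intros S H1. apply NNPP. now rewrite <- HZZ.
  - apply I_wins_of_II_wins; [exact II_answers_F|].
    intros S H2 H1. now apply HZZ in H1.
  - apply I_wins_of_II_wins; [exact II_answers_Fplus|].
    intros S. apply HZZ.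
  - apply II_wins_of_I_wins.
    + intros A B HA HB. destruct (Fplus_meets B A HB HA) as [n []]. eauto.
    + intros S. apply HZZ.
Qed.

End Upward_closed_family.

Theorem theorem2p10 (F : family) (HF : is_filter F) (Hp : proper F) :
  dual_games (Fplus F) F F (Fc F) /\
  dual_games (Fplus F) (Fplus F) F (Fstar F) /\
  dual_games (Fplus F) (Fc F) F F /\
  dual_games (Fplus F) (Fstar F) F (Fplus F).
Proof.
  destruct HF as [_ [F_up _]].
  repeat split; apply (dual_games_Fplus_F F F_up); unfold Fc, Fstar; intros S;
    split; try tauto; apply NNPP.
Qed.
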